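(* Let $(V,\tau)$ be a topological mixed lattice space. (a) If $A\subseteq V$ is balanced and absorbing, then $MF_1(A)=-MF_2(A)$, and the set $B=MF_1(A)+MF_2(A)$ is balanced and absorbing and has both of the following properties: ($y\in B$ and $0\le x\preccurlyeq y$) implies $x\in B$; ($y\in B$ and $0\preccurlyeq x\le y$) implies $x\in B$. If in addition $A$ is convex, then $MF_1(A)$, $MF_2(A)$ and $B$ are convex. (b) If $\tau$ is locally mixed-full, then every neighborhood of zero contains a balanced absorbing neighborhood $W$ of zero such that ($y\in W$, $0\le x\preccurlyeq y$) implies $x\in W$ and ($y\in W$, $0\preccurlyeq x\le y$) implies $x\in W$. If $\tau$ is moreover locally convex, $W$ can additionally be chosen convex.
   Context: A mixed lattice vector space $(V,\le,\preccurlyeq)$ is a real vector space $V$ with two partial orderings $\le$ (initial order) and $\preccurlyeq$ (specific order), each making $V$ a partially ordered vector space, with positive cones $V_p=\{x:0\le x\}$, $V_{sp}=\{x:0\preccurlyeq x\}$, such that: (1) for all $x,y$ the elements $x\curlyvee y=\min\{w: w\succcurlyeq x,\ w\ge y\}$ and $x\curlywedge y=\max\{w: w\preccurlyeq x,\ w\le y\}$ exist (min/max with respect to $\le$); (2) $x\preccurlyeq y$ implies $x\le y$; (3) $x\curlyvee y, x\curlywedge y\in V_{sp}$ whenever $x,y\in V_{sp}$. A topological mixed lattice space is such a $V$ with a vector topology $\tau$ for which $(x,y)\mapsto x\curlyvee y$ and $(x,y)\mapsto x\curlywedge y$ are continuous $V\times V\to V$ (product topology). For $A\subseteq V$: $MF_1(A)=\{y: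 x\preccurlyeq y\le z \text{ for some } x,z\in A\}$, $MF_2(A)=\{y: x\le y\preccurlyeq z \text{ for some } x,z\in A\}$. A vector topology is locally mixed-full if every neighborhood of zero contains a neighborhood $W$ of zero such that $y\in W$ and $0\preccurlyeq x\le y$ imply $x\in W$. *)

From HB Require Import structures.
From mathcomp Require Import all_boot all_order all_algebra.
From mathcomp Require Import all_classical all_reals all_analysis.
Set Implicit Arguments. Unset Strict Implicit. Unset Printing Implicit Defensive.
Import Order.TTheory GRing.Theory Num.Theory.
Local Open Scope classical_set_scope.
Local Open Scope ring_scope.

Section MixedLattice.
Variables (R : realType) (V : lmodType R).

Definition ordered_vector_space (le : V -> V -> Prop) : Prop :=
  [/\ (forall x, le x x),
      (forall x y, le x y -> le y x -> x = y),
      (forall x y z, le x y -> le y z -> le x z),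
      (forall x y z, le x y -> le (x + z) (y + z)) &
      (forall (a : R) x y, 0 <= a -> le x y -> le (a *: x) (a *: y))].

(** A mixed lattice vector space structure on V: initial order [le] (<=),
    specific order [sle] (≼), and the mixed envelopes
    [mup x y] = x ⋎ y = min_{<=} {w | w ≽ x, w >= y} and
    [mlow x y] = x ⋏ y = max_{<=} {w | w ≼ x, w <= y}.
    Since [le] is antisymmetric these min/max are unique, so giving them
    as functions with their defining property is the same as requiring
    their existence. *)
Record mixed_lattice := MixedLattice {
  ml_le : V -> V -> Prop;
  ml_sle : V -> V -> Prop;
  ml_up : V -> V -> V;
  ml_low : V -> V -> V;
  ml_le_ovs : ordered_vector_space ml_le;
  ml_sle_ovs : ordered_vector_space ml_sle;
  ml_upP : forall x y,
    [/\ ml_sle x (ml_up x y), ml_le y (ml_up x y) &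
        forall w, ml_sle x w -> ml_le y w -> ml_le (ml_up x y) w];
  ml_lowP : forall x y,
    [/\ ml_sle (ml_low x y) x, ml_le (ml_low x y) y &
        forall w, ml_sle w x -> ml_le w y -> ml_le w (ml_low x y)];
  ml_sle_le : forall x y, ml_sle x y -> ml_le x y;
  ml_pos : forall x y, ml_sle 0 x -> ml_sle 0 y ->
    ml_sle 0 (ml_up x y) /\ ml_sle 0 (ml_low x y)
}.

Variable M : mixed_lattice.
Local Notation le := (ml_le M).
Local Notation sle := (ml_sle M).

Definition MF1 (A : set V) : set V :=
  [set y | exists x z, [/\ A x, A z, sle x y & le y z]].

Definition MF2 (A : set V) : set V :=
  [set y | exists x z, [/\ A x, A z, le x y & sle y z]].

Definition solid_le_sle (W : set V) : Prop :=
  forall x y, W y -> le 0 x -> sle x y -> W x.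

Definition solid_sle_le (W : set V) : Prop :=
  forall x y, W y -> sle 0 x -> le x y -> W x.

End MixedLattice.

Section SetOps.
Variables (R : realType) (V : lmodType R).

Definition set_add (S T : set V) : set V :=
  [set z | exists a b, [/\ S a, T b & z = a + b]].
Definition set_opp (S : set V) : set V := [set - y | y in S].

Definition balanced_set (A : set V) : Prop :=
  forall (l : R) x, `|l| <= 1 -> A x -> A (l *: x).

Definition absorbing_set (A : set V) : Prop :=
  forall x : V, exists2 r : R, 0 < r &
    forall l : R, r <= `|l| -> exists2 a, A a & x = l *: a.
End SetOps.

Definition topological_mixed_lattice (R : realType)
  (V : topologicalLmodType R) (M : mixed_lattice V) : Prop :=
  continuous (fun p : V * V => ml_up M p.1 p.2) /\
  continuous (fun p : V * V => ml_low M p.1 p.2).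

Definition locally_mixed_full (R : realType)
  (V : topologicalLmodType R) (M : mixed_lattice V) : Prop :=
  forall U : set V, nbhs (0 : V) U ->
    exists W : set V, [/\ nbhs (0 : V) W, W `<=` U & solid_sle_le M W].

(** locally convex: the topology has a basis of convex sets
    (as in the mixin of MathComp-Analysis' tvsType) *)
Definition locally_convex_top (R : realType) (V : topologicalLmodType R) : Prop :=
  exists2 B : set_system V, (forall b, b \in B -> @convex_set R V b) & basis B.

From HB Require Import structures.
From mathcomp Require Import all_boot all_order all_algebra.
From mathcomp Require Import all_classical all_reals all_analysis.
From mathcomp Require Import ring lra.
Import Order.TTheory GRing.Theory Num.Theory.
Local Open Scope classical_set_scope.
Local Open Scope ring_scope.

(** [MF1(A)] and
    [MF2(A)] are the order hulls of [A] for the pairs ([≼], [<=]) and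
    ([<=], [≼]), so each fact about one hull yields the mirror fact about the
    other.  For symmetric [A], negation exchanges the two hulls, nonnegative
    scalars preserve each, and [0 <= x ≼ u + v] with [u ∈ MF1(A)],
    [v ∈ MF2(A)] gives [x - u ∈ MF2(A)].  For (b): if [A - A] lies in a solid
    neighbourhood [W], then [MF1(A) ⊆ A + W] and [MF2(A) ⊆ A - W], so
    [MF1(A) + MF2(A)] is small when [A] is; take for [A] the balanced core of
    a small (convex) neighbourhood. *)

Section OrderedVectorSpace.
Context {R : realType} {V : lmodType R} {le : V -> V -> Prop}.
Hypothesis ovs : ordered_vector_space le.

Lemma ovs_refl x : le x x.
Proof. by case: ovs. Qed.

Lemma ovs_trans {x y z} : le x y -> le y z -> le x z.
Proof. by case: ovs => _ _ + _ _; apply. Qed.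

Lemma ovs_addr z {x y} : le x y -> le (x + z) (y + z).
Proof. by case: ovs => _ _ _ + _; apply. Qed.

Lemma ovs_add {x y x' y'} : le x y -> le x' y' -> le (x + x') (y + y').
Proof.
move=> xy xy'; apply: (ovs_trans (ovs_addr x' xy)).
by rewrite ![y + _]addrC; apply: ovs_addr.
Qed.

Lemma ovs_scale (a : R) {x y} : 0 <= a -> le x y -> le (a *: x) (a *: y).
Proof. by case: ovs => _ _ _ _; apply. Qed.

Lemma ovs_opp {x y} : le x y -> le (- y) (- x).
Proof.
move=> /(ovs_addr (- x - y)).
by rewrite addrA subrr add0r addrCA subrr addr0.
Qed.

Lemma ovs_subr_ge0 {x y} : le x y -> le 0 (y - x).
Proof. by move=> /(ovs_addr (- x)); rewrite subrr. Qed.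

Lemma ovs_subl {x y z} : le x (y + z) -> le (x - y) z.
Proof. by move=> /(ovs_addr (- y)); rewrite addrAC subrr add0r. Qed.

Local Open Scope convex_scope.

Lemma conv_lmodE (x y : convex_lmodType V) (t : {i01 R}) :
  x <| t |> y = t%:num *: x + (1 - t%:num) *: y :> V.
Proof. by []. Qed.

Lemma ovs_conv (t : {i01 R}) (x y x' y' : convex_lmodType V) :
  le x y -> le x' y' -> le (x <| t |> x') (y <| t |> y').
Proof.
move=> xy xy'; rewrite !conv_lmodE.
by apply: ovs_add; apply: ovs_scale; rewrite ?subr_ge0 ?ge0 ?le1.
Qed.

End OrderedVectorSpace.

Definition order_hull {R : realType} {V : lmodType R}
    (le1 le2 : V -> V -> Prop) (A : set V) : set V :=
  [set y | exists x z, [/\ A x, A z, le1 x y & le2 y z]].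

Definition mixed_hull {R : realType} {V : lmodType R}
    (le1 le2 : V -> V -> Prop) (A : set V) : set V :=
  set_add (order_hull le1 le2 A) (order_hull le2 le1 A).

Section SetOps.
Context {R : realType} {V : lmodType R}.
Implicit Types A S T : set V.

Lemma set_addC S T : set_add S T = set_add T S.
Proof.
by apply/seteqP; split=> _ [a [b [Sa Tb ->]]]; exists b, a; rewrite addrC.
Qed.

Lemma balancedN {A x} : balanced_set A -> A x -> A (- x).
Proof. by move=> bA /(bA (-1)); rewrite normrN normr1 scaleN1r; apply. Qed.

Lemma balanced_absorbing_set0 {A} : balanced_set A -> absorbing_set A -> A 0.
Proof.
move=> bA /(_ 0) [r r0 /(_ r)]; rewrite ger0_norm ?(ltW r0)// lexx => /(_ isT) [a Aa _].
by move: Aa => /(bA 0); rewrite normr0 scale0r; apply.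
Qed.

Lemma absorbing_setS S T : S `<=` T -> absorbing_set S -> absorbing_set T.
Proof.
move=> ST aS x; have [r r0 Sr] := aS x.
by exists r => // l /Sr [a /ST Ta ->]; exists a.
Qed.

Local Open Scope convex_scope.

Lemma convex_set_add S T : @convex_set R V S -> @convex_set R V T ->
  @convex_set R V (set_add S T).
Proof.
move=> cS cT _ _ t /set_mem [u [v [Su Tv ->]]] /set_mem [u' [v' [Su' Tv' ->]]].
apply/mem_set; exists ((u : convex_lmodType V) <| t |> u').
exists ((v : convex_lmodType V) <| t |> v'); split.
- by apply/set_mem/cS; apply/mem_set.
- by apply/set_mem/cT; apply/mem_set.
- by rewrite !conv_lmodE !scalerDr -!addrA; congr (_ + _); rewrite addrCA.
Qed.

End SetOps.

Section OrderHull.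
Context {R : realType} {V : lmodType R} {le1 le2 : V -> V -> Prop}.
Hypotheses (ovs1 : ordered_vector_space le1) (ovs2 : ordered_vector_space le2).
Context {A : set V}.

Lemma order_hull_scale (l : R) y : balanced_set A -> 0 <= l <= 1 ->
  order_hull le1 le2 A y -> order_hull le1 le2 A (l *: y).
Proof.
move=> bA /andP[l0 l1] [x [z [Ax Az xy yz]]].
have bl : `|l| <= 1 by rewrite ger0_norm.
by exists (l *: x), (l *: z); split; try exact: bA; exact: ovs_scale.
Qed.

Lemma order_hull_opp y : balanced_set A ->
  order_hull le1 le2 A y -> order_hull le2 le1 A (- y).
Proof.
move=> bA [x [z [Ax Az xy yz]]].
by exists (- z), (- x); split; try exact: balancedN; exact: ovs_opp.
Qed.

Local Open Scope convex_scope.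

Lemma convex_order_hull : @convex_set R V A ->
  @convex_set R V (order_hull le1 le2 A).
Proof.
move=> cA y y' t /set_mem [x [z [Ax Az xy yz]]] /set_mem [x' [z' [Ax' Az' xy' yz']]].
apply/mem_set; exists ((x : convex_lmodType V) <| t |> x').
exists ((z : convex_lmodType V) <| t |> z'); split; try exact: ovs_conv.
- by apply/set_mem/cA; apply/mem_set.
- by apply/set_mem/cA; apply/mem_set.
Qed.

End OrderHull.

Section MixedHull.
Context {R : realType} {V : lmodType R} {le1 le2 : V -> V -> Prop}.
Hypotheses (ovs1 : ordered_vector_space le1) (ovs2 : ordered_vector_space le2).
Context {A : set V}.

Lemma sub_mixed_hull : A 0 -> A `<=` mixed_hull le1 le2 A.
Proof.
move=> A0 a Aa; exists a, 0; rewrite addr0; split=> //.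
  by exists a, a; split=> //; exact: ovs_refl.
by exists 0, 0; split=> //; exact: ovs_refl.
Qed.

Lemma balanced_mixed_hull : balanced_set A ->
  balanced_set (mixed_hull le1 le2 A).
Proof.
move=> bA l _ l1 [u [v [Hu Hv ->]]]; have [l0|l0] := leP 0 l.
  have l01 : 0 <= l <= 1 by rewrite l0 (le_trans (ler_norm l)).
  exists (l *: u), (l *: v); rewrite scalerDr.
  by split=> //; [exact: (order_hull_scale ovs1 ovs2)|exact: (order_hull_scale ovs2 ovs1)].
have l01 : 0 <= - l <= 1.
  by rewrite oppr_ge0 (ltW l0) (le_trans _ l1) // -normrN ler_norm.
exists (- l *: - v), (- l *: - u); split.
- by apply/(order_hull_scale ovs1 ovs2)/(order_hull_opp ovs2 ovs1).
- by apply/(order_hull_scale ovs2 ovs1)/(order_hull_opp ovs1 ovs2).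
- by rewrite !scalerN !scaleNr !opprK scalerDr addrC.
Qed.

Lemma order_hull_oppE : balanced_set A ->
  order_hull le1 le2 A = set_opp (order_hull le2 le1 A).
Proof.
move=> bA; apply/seteqP; split=> [y Hy|_ [y Hy <-]].
  by exists (- y); [exact: (order_hull_opp ovs1 ovs2)|rewrite opprK].
exact: (order_hull_opp ovs2 ovs1).
Qed.

Lemma mixed_hullC : mixed_hull le1 le2 A = mixed_hull le2 le1 A.
Proof. exact: set_addC. Qed.

(* Write [x = u + (x - u)]: from [le2 u z1], [le2 0 x] and
   [le1 x (u + v)], [le1 v z2] we get [le2 (- z1) (x - u)] and [le1 (x - u) z2]. *)
Lemma mixed_hull_solid x y : balanced_set A ->
  mixed_hull le1 le2 A y -> le2 0 x -> le1 x y -> mixed_hull le1 le2 A x.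
Proof.
move=> bA [u [v [[x1 [z1 [Ax1 Az1 x1u uz1]]] [x2 [z2 [Ax2 Az2 x2v vz2]]] ->]]] x0 xy.
exists u, (x - u); split; [by exists x1, z1| |by rewrite addrC subrK].
exists (- z1), z2; split; [exact: balancedN|by []| |].
- by have := ovs_add ovs2 (ovs_opp ovs2 uz1) x0; rewrite addr0 addrC.
- exact/(ovs_subl ovs1)/(ovs_trans ovs1 xy)/(ovs_add ovs1 (ovs_refl ovs1 u)).
Qed.

Lemma convex_mixed_hull : @convex_set R V A ->
  @convex_set R V (mixed_hull le1 le2 A).
Proof.
by move=> cA; apply: convex_set_add; [exact: (convex_order_hull ovs1 ovs2)|
  exact: (convex_order_hull ovs2 ovs1)].
Qed.

Lemma order_hull_sub_addr {W : set V} {y} :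
  (forall s t, W t -> le1 0 s -> le2 s t -> W s) ->
  (forall x z, A x -> A z -> W (z - x)) ->
  order_hull le1 le2 A y -> exists x s, [/\ A x, W s & y = x + s].
Proof.
move=> sW AAW [x [z [Ax Az xy yz]]]; exists x, (y - x); split=> //.
- exact: (sW _ (z - x)) (AAW x z Ax Az) (ovs_subr_ge0 ovs1 xy) (ovs_addr ovs2 _ yz).
- by rewrite addrC subrK.
Qed.

Lemma order_hull_sub_subr {W : set V} {y} :
  (forall s t, W t -> le1 0 s -> le2 s t -> W s) ->
  (forall x z, A x -> A z -> W (z - x)) ->
  order_hull le2 le1 A y -> exists z s, [/\ A z, W s & y = z - s].
Proof.
move=> sW AAW [x [z [Ax Az xy yz]]]; exists z, (z - y); split=> //.
- apply: (sW _ (z - x)) (AAW x z Ax Az) (ovs_subr_ge0 ovs1 yz) _.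
  by rewrite ![z + _]addrC; apply/ovs_addr/ovs_opp.
- by rewrite opprB addrC subrK.
Qed.

End MixedHull.

Lemma nbhs0_split {M : topologicalZmodType} {f : M * M -> M} {U : set M} :
  continuous f -> f (0, 0) = 0 -> nbhs 0 U ->
  exists2 W : set M, nbhs 0 W & forall a b, W a -> W b -> U (f (a, b)).
Proof.
move=> cf f0 nU; have := cf (0, 0); rewrite /continuous_at f0.
move=> /(_ U nU) [[P Q] /= [nP nQ] PQU].
by exists (P `&` Q) => [|a b [Pa _] [_ Qb]]; [exact: filterI|exact: (PQU (a, b))].
Qed.

Section TopologicalLmodule.
Context {R : realType} {V : topologicalLmodType R}.
Implicit Types U : set V.

Lemma nbhs0_absorbing {U} : nbhs 0 U -> absorbing_set U.
Proof.
move=> nU x; have := @scale_continuous R V (0, x); rewrite /continuous_at scale0r.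
move=> /(_ U nU) [[P Q] /= [/nbhs_ballP [e /= e0 eP] Qx] PQU].
have e2 : 0 < 2 / e by rewrite divr_gt0.
exists (2 / e) => // l le2l; have l0 : l != 0 by rewrite -normr_gt0 (lt_le_trans e2).
exists (l^-1 *: x); last by rewrite scalerA mulfV // scale1r.
apply: (PQU (l^-1, x)); split; last exact: nbhs_singleton.
apply: eP; rewrite /ball /= sub0r normrN normfV.
apply: (@le_lt_trans _ _ (e / 2)); last by lra.
by rewrite -invf_div lef_pV2 ?posrE ?divr_gt0 ?normr_gt0.
Qed.

Definition balanced_core U : set V :=
  [set y | forall l : R, `|l| <= 1 -> U (l *: y)].

Lemma balanced_core_sub U : balanced_core U `<=` U.
Proof. by move=> y /(_ 1); rewrite normr1 scale1r; apply. Qed.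

Lemma balanced_balanced_core U : balanced_set (balanced_core U).
Proof.
move=> l y l1 Uy l' l'1; rewrite scalerA; apply: Uy.
by rewrite normrM mulr_ile1.
Qed.

(* If [|s| < e] and [y ∈ Q] imply [s *: y ∈ U], then [balanced_core U]
   contains the neighbourhood [(e/2) *: Q]. *)
Lemma nbhs0_balanced_core {U} : nbhs 0 U -> nbhs 0 (balanced_core U).
Proof.
move=> nU; have := @scale_continuous R V (0, 0); rewrite /continuous_at scale0r.
move=> /(_ U nU) [[P Q] /= [/nbhs_ballP [e /= e0 eP] nQ] PQU].
have := @scale_continuous R V (2 / e, 0); rewrite /continuous_at scaler0.
move=> /(_ Q nQ) [[P' Q'] /= [nP' nQ'] PQ'Q].
apply: filterS nQ' => y Q'y l l1.
have -> : l *: y = (l * (e / 2)) *: ((2 / e) *: y).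
  by rewrite scalerA; congr (_ *: _); field; lra.
apply: (PQU (_, _)); split; last exact: (PQ'Q (_, _)) (conj (nbhs_singleton nP') Q'y).
apply: eP; rewrite /ball /= sub0r normrN normrM.
rewrite [`|e / 2|]gtr0_norm ?divr_gt0//; have := normr_ge0 l; nra.
Qed.

Local Open Scope convex_scope.

Lemma convex_balanced_core U : @convex_set R V U ->
  @convex_set R V (balanced_core U).
Proof.
move=> cU y y' t /set_mem Uy /set_mem Uy'; apply/mem_set => l l1.
have -> : l *: ((y : convex_lmodType V) <| t |> y') =
    (l *: y : convex_lmodType V) <| t |> (l *: y').
  by rewrite !conv_lmodE scalerDr !scalerA [l * _]mulrC [l * (1 - _)]mulrC.
by apply/set_mem/cU; apply/mem_set; [exact: Uy|exact: Uy'].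
Qed.

Lemma locally_convex_nbhs0 {U} : locally_convex_top V -> nbhs 0 U ->
  exists C : set V, [/\ nbhs 0 C, @convex_set R V C & C `<=` U].
Proof.
move=> [B cB [Bo B_nbhs]] nU; have [C [BC C0] CU] := B_nbhs 0 U nU.
exists C; split=> //; last exact: cB (mem_set BC).
by apply: open_nbhs_nbhs; split=> //; exact: Bo.
Qed.

End TopologicalLmodule.

Section MixedLattice.
Context {R : realType}.

Lemma mixed_hull_balanced_absorbing_solid {V : lmodType R} (M : mixed_lattice V)
    (A : set V) : balanced_set A -> absorbing_set A ->
  let B := mixed_hull (ml_sle M) (ml_le M) A in
  [/\ MF1 M A = set_opp (MF2 M A), balanced_set B, absorbing_set B,
      solid_le_sle M B & solid_sle_le M B].
Proof.
move=> bA aA B; have [sle_ovs le_ovs] := (ml_sle_ovs M, ml_le_ovs M).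
split.
- exact: order_hull_oppE.
- exact: balanced_mixed_hull.
- have A0 := balanced_absorbing_set0 bA aA.
  exact: absorbing_setS (sub_mixed_hull sle_ovs le_ovs A0) aA.
- by move=> x y; exact: mixed_hull_solid.
- by rewrite /B mixed_hullC => x y; exact: mixed_hull_solid.
Qed.

Context {V : topologicalLmodType R} (M : mixed_lattice V).
Local Notation hull A := (mixed_hull (ml_sle M) (ml_le M) A).

(* For [A ⊆ W] we have [MF1(A) ⊆ A + W0] and [MF2(A) ⊆ A - W0], where
   [W ⊆ W0 ⊆ U2] and [U2] is balanced, so [hull A ⊆ U2 + U2 + U2 + U2 ⊆ U]. *)
Lemma mixed_hull_sub_nbhs0 {U : set V} : locally_mixed_full M -> nbhs 0 U ->
  exists2 W : set V, nbhs 0 W & forall A, A `<=` W -> hull A `<=` U.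
Proof.
move=> mfull nU; have [sle_ovs le_ovs] := (ml_sle_ovs M, ml_le_ovs M).
have [U1 nU1 U1_add] := nbhs0_split add_continuous (addr0 0) nU.
have [U2 nU2 U2_add] := nbhs0_split add_continuous (addr0 0) nU1.
have [W0 [nW0 W0_U2 solid_W0]] := mfull _ (nbhs0_balanced_core nU2).
have [W nW W_sub] := nbhs0_split (@sub_continuous V) (subr0 0) nW0.
have W_W0 : W `<=` W0.
  by move=> a Wa; rewrite -[a]subr0; apply: W_sub => //; exact: nbhs_singleton.
have W0_U2' : W0 `<=` U2 by move=> w /W0_U2 /balanced_core_sub.
exists W => // A AW _ [u [v [Hu Hv ->]]].
have AAW0 x z : A x -> A z -> W0 (z - x) by move=> /AW Wx /AW Wz; exact: W_sub.
have [x [s [Ax W0s ->]]] := order_hull_sub_addr sle_ovs le_ovs solid_W0 AAW0 Hu.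
have [z [s' [Az W0s' ->]]] := order_hull_sub_subr sle_ovs le_ovs solid_W0 AAW0 Hv.
apply: U1_add; apply: U2_add.
- exact/W0_U2'/W_W0/AW.
- exact: W0_U2'.
- exact/W0_U2'/W_W0/AW.
- exact: balanced_core_sub (balancedN (balanced_balanced_core U2) (W0_U2 _ W0s')).
Qed.

Lemma mixed_hull_balanced_core_nbhs0 {C : set V} : nbhs 0 C ->
  let W := hull (balanced_core C) in
  [/\ nbhs 0 W, balanced_set W, absorbing_set W, solid_le_sle M W &
      solid_sle_le M W].
Proof.
move=> nC W; rewrite {}/W; have nA := nbhs0_balanced_core nC.
have [_ bW aW sW1 sW2] :=
  mixed_hull_balanced_absorbing_solid M _ (balanced_balanced_core C)
    (nbhs0_absorbing nA).
split=> //; apply: (filterS _ nA).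
exact (sub_mixed_hull (ml_sle_ovs M) (ml_le_ovs M) (nbhs_singleton nA)).
Qed.

End MixedLattice.

Theorem proposition3p8 (R : realType) (V : topologicalLmodType R)
  (M : mixed_lattice V) (HM : topological_mixed_lattice M) :
  (forall A : set V, balanced_set A -> absorbing_set A ->
     let B := set_add (MF1 M A) (MF2 M A) in
     [/\ MF1 M A = set_opp (MF2 M A),
         balanced_set B, absorbing_set B,
         solid_le_sle M B & solid_sle_le M B] /\
         (@convex_set R V A ->
            [/\ @convex_set R V (MF1 M A), @convex_set R V (MF2 M A)
              & @convex_set R V B]))
  /\
  (locally_mixed_full M ->
     (forall U : set V, nbhs (0 : V) U ->
        exists W : set V,
          [/\ nbhs (0 : V) W, W `<=` U, balanced_set W, absorbing_set W &
              solid_le_sle M W /\ solid_sle_le M W]) /\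
     (locally_convex_top V ->
        forall U : set V, nbhs (0 : V) U ->
        exists W : set V,
          [/\ nbhs (0 : V) W, W `<=` U, balanced_set W, absorbing_set W &
              [/\ solid_le_sle M W, solid_sle_le M W & @convex_set R V W]])).
Proof.
have [sle_ovs le_ovs] := (ml_sle_ovs M, ml_le_ovs M).
split=> [A bA aA B|mfull].
  split; first exact: mixed_hull_balanced_absorbing_solid.
  by move=> cA; split; [exact: convex_order_hull..|exact: convex_mixed_hull].
split=> [U nU|lconvex U nU]; have [W nW WU] := mixed_hull_sub_nbhs0 M mfull nU.
  have [? ? ? ? ?] := mixed_hull_balanced_core_nbhs0 M nW.
  exists (mixed_hull (ml_sle M) (ml_le M) (balanced_core W)); split=> //.
  exact (WU _ (balanced_core_sub W)).
have [C [nC cC CW]] := locally_convex_nbhs0 lconvex nW.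
have [? ? ? ? ?] := mixed_hull_balanced_core_nbhs0 M nC.
exists (mixed_hull (ml_sle M) (ml_le M) (balanced_core C)); split=> //.
- exact (WU _ (subset_trans (balanced_core_sub C) CW)).
- by split=> //; apply/convex_mixed_hull/convex_balanced_core.
Qed.
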